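(* Let $q=p^n$ be a prime power and $g\ge 2$. Let $P(t)$ be a Weil polynomial of degree $2g$, written as $P(t)=\prod_{i=1}^g(t^2+x_it+q)$ where $x_i=-(\omega_i+\overline{\omega_i})$ and $\omega_1,\overline{\omega_1},\dots,\omega_g,\overline{\omega_g}$ are its roots, and let $f(t)=\prod_{i=1}^g(t+x_i)$ (a monic polynomial with integer coefficients). Suppose $P(t)\neq (t-\sqrt q)^2(t+\sqrt q)^2$. Then $P(t)$ is irreducible over $\mathbb{Q}$ if and only if $f(t)$ is irreducible over $\mathbb{Q}$.
   Context: A $q$-Weil number is an algebraic integer $\omega$ such that $|\iota(\omega)|=\sqrt q$ for every embedding $\iota:\mathbb{Q}(\omega)\to\mathbb{C}$. A Weil polynomial (of degree $2g$, for the prime power $q$) is a monic polynomial with integer coefficients whose multiset of complex roots can be written as $\{\omega_1,\overline{\omega_1},\dots,\omega_g,\overline{\omega_g}\}$ with each $\omega_i$ a $q$-Weil number. *)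

From HB Require Import structures.
From mathcomp Require Import all_boot all_order all_algebra all_field.
Unset Printing Implicit Defensive.
Import Order.TTheory GRing.Theory Num.Theory.
Local Open Scope ring_scope.

(* Embeddings Q(w) -> C are exactly the
   restrictions of ring automorphisms of the algebraic closure algC. *)
Definition qWeil_number (q : nat) (w : algC) : Prop :=
  w \in Aint /\ forall nu : {rmorphism algC -> algC}, `|nu w| = sqrtC q%:R.

Definition polyC_of_int (P : {poly int}) : {poly algC} := map_poly intr P.

Definition Weil_roots (q g : nat) (P : {poly int}) (w : 'I_g -> algC) : Prop :=
  P \is monic /\ (forall i, qWeil_number q (w i)) /\
  polyC_of_int P = \prod_(i < g) (('X - (w i)%:P) * ('X - (Num.conj (w i))%:P)).

Definition irreducible_over_Q (P : {poly int}) : Prop :=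
  irreducible_poly (map_poly intr P : {poly rat}).

From HB Require Import structures.
From mathcomp Require Import all_boot all_order all_algebra all_field ring zify.
Import Order.TTheory GRing.Theory Num.Theory.
Set Implicit Arguments.
Unset Strict Implicit.

Local Open Scope ring_scope.

(* Write y_i = w_i + w_i^*, so that w_i and w_i^* are the roots of
   t^2 - y_i t + q.  If D is a factor of f of degree d, then t^d D(t + q/t) is
   a nonzero rational polynomial of degree at most 2d vanishing at a root of
   P, so an irreducible P forces d = g.  Conversely, reducing modulo
   t^2 = y t - q writes D(z) = A(y_j) z + B(y_j) with rational A and B for any
   root z in {w_j, w_j^*}; when z is not real, a factor D of P vanishing at z
   forces A(y_j) = B(y_j) = 0, so an irreducible f divides A and B, and D
   vanishes at all the (distinct) roots of P.  A real w_i makes y_i^2 = 4q, so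
   f | t^2 - 4q, g = 2 and P = (t - sqrt q)^2 (t + sqrt q)^2. *)

Lemma irreducible_dvdp_common_root (F : fieldType) (R : idomainType)
    (phi : {rmorphism F -> R}) (p e : {poly F}) (z : R) :
  irreducible_poly p -> root (map_poly phi p) z -> root (map_poly phi e) z ->
  p %| e.
Proof.
move=> p_irr pz ez; apply/negPn; rewrite -irreducible_poly_coprime //.
by rewrite -(coprimep_map phi); apply/negP => /coprimep_root/(_ pz)/negP.
Qed.

Lemma pchar0_irreducible_separable (F : fieldType) (p : {poly F}) :
  has_pchar0 F -> irreducible_poly p -> separable_poly p.
Proof.
move=> F0 p_irr; have [size_p _] := p_irr; have p_neq0 := irredp_neq0 p_irr.
have dp_neq0 : p^`() != 0.
  apply/eqP => dp0; have := congr1 (fun r : {poly F} => r`_(size p).-2) dp0.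
  rewrite coef_deriv coef0 prednK ?ltn_predRL // -mulr_natr => /eqP.
  rewrite mulf_eq0 (pcharf0P _).1 // -lead_coefE lead_coef_eq0 (negPf p_neq0).
  by rewrite -subn1 subn_eq0 leqNgt size_p.
rewrite separable_poly.unlock irreducible_poly_coprime //; apply: contraL (lt_size_deriv p_neq0).
by move=> /(dvdp_leq dp_neq0); rewrite leqNgt.
Qed.

Section QuadraticReduction.

Variables (R S : comNzRingType) (phi : {rmorphism R -> S}) (c : R).

(* Coefficients of [z ^+ n] reduced modulo [z ^+ 2 = y * z - c], as
   polynomials in [y]. *)
Fixpoint reduce_pow (n : nat) : {poly R} * {poly R} :=
  if n is m.+1 then ('X * (reduce_pow m).1 + (reduce_pow m).2, - c%:P * (reduce_pow m).1)
  else (0, 1).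

Definition reduce_lin (D : {poly R}) := \sum_(i < size D) D`_i *: (reduce_pow i).1.
Definition reduce_const (D : {poly R}) := \sum_(i < size D) D`_i *: (reduce_pow i).2.

Lemma horner_reduce_pow (n : nat) (y z : S) : z ^+ 2 = y * z - phi c ->
  z ^+ n = (map_poly phi (reduce_pow n).1).[y] * z + (map_poly phi (reduce_pow n).2).[y].
Proof.
move=> zE; elim: n => [|n IHn] /=; first by rewrite map_poly0 rmorph1 !hornerE; ring.
rewrite exprSr IHn !(rmorphD, rmorphM, rmorphN) /= map_polyC map_polyX !hornerE.
set a := _.[y]; set b := _.[y].
have -> : (a * z + b) * z = a * z ^+ 2 + b * z by ring.
by rewrite zE; ring.
Qed.

Lemma horner_reduce (D : {poly R}) (y z : S) : z ^+ 2 = y * z - phi c ->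
  (map_poly phi D).[z] =
    (map_poly phi (reduce_lin D)).[y] * z + (map_poly phi (reduce_const D)).[y].
Proof.
move=> zE; rewrite -{1}[D]coefK poly_def !rmorph_sum !horner_sum.
rewrite big_distrl -big_split /=; apply: eq_bigr => i _.
rewrite !map_polyZ map_polyXn !hornerZ hornerXn (horner_reduce_pow i zE).
by rewrite mulrDr mulrA.
Qed.

End QuadraticReduction.

Section ReciprocalComposition.

Variables (R : idomainType) (c : R).

(* [recip_comp D] is [t ^+ d * D (t + c / t)] with [d] the degree of [D]. *)
Definition recip_comp (D : {poly R}) :=
  \sum_(i < size D) D`_i *: ('X^((size D).-1 - i) * ('X^2 + c%:P) ^+ i).

Lemma horner_recip_comp (S : comNzRingType) (phi : {rmorphism R -> S})
    (D : {poly R}) (y w : S) :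
  w ^+ 2 + phi c = w * y ->
  (map_poly phi (recip_comp D)).[w] = w ^+ (size D).-1 * (map_poly phi D).[y].
Proof.
move=> wE; rewrite -[X in (map_poly _ X).[y]]coefK poly_def !rmorph_sum.
rewrite !horner_sum big_distrr.
apply: eq_bigr => i _ /=.
have le_i_d : (i <= (size D).-1)%N by move: (ltn_ord i); lia.
rewrite !map_polyZ rmorphM !rmorphXn rmorphD /= map_polyC map_polyX map_polyXn.
rewrite !hornerZ hornerM !horner_exp !hornerX hornerD !hornerXn hornerC wE exprMn.
rewrite -{2}(subnK le_i_d) exprD.
by move: (w ^+ _) (w ^+ i) (y ^+ i) => a b e; ring.
Qed.

Lemma size_recip_comp (D : {poly R}) : (size (recip_comp D) <= (size D).-1.*2.+1)%N.
Proof.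
apply: (leq_trans (size_sum _ _ _)); apply/bigmax_leqP => i _.
apply: (leq_trans (size_scale_leq _ _)); apply: (leq_trans (size_polyMleq _ _)).
have := size_poly_exp_leq ('X^2 + c%:P) i; rewrite size_polyXn size_XnaddC //=.
have le_i_d : (i <= (size D).-1)%N by move: (ltn_ord i); lia.
by move: le_i_d; move: (nat_of_ord i) ((size D).-1) => k d; lia.
Qed.

Lemma recip_comp_neq0 (D : {poly R}) : c != 0 -> D != 0 -> recip_comp D != 0.
Proof.
move=> c_neq0 D_neq0.
have lt_d : ((size D).-1 < size D)%N by rewrite prednK ?size_poly_gt0.
apply: contra_neq (_ : (recip_comp D).[0] != 0) => [->|]; first exact: horner0.
rewrite horner_sum (bigD1 (Ordinal lt_d)) //= big1 => [|i ne_i_d]; last first.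
  have lt_i_d : (i < (size D).-1)%N.
    have i_neq_d : val i != (size D).-1.
      by apply: contra_neq ne_i_d => eq_i_d; apply/val_inj.
    by rewrite ltn_neqAle i_neq_d -ltnS prednK ?size_poly_gt0 ?ltn_ord.
  by rewrite hornerZ hornerM hornerXn expr0n subn_eq0 leqNgt lt_i_d mul0r mulr0.
rewrite addr0 hornerZ hornerM hornerXn subnn expr0 mul1r horner_exp hornerD hornerXn.
rewrite expr0n add0r hornerC mulf_neq0 ?expf_neq0 //.
by rewrite -lead_coefE lead_coef_eq0.
Qed.

End ReciprocalComposition.

Local Notation toC := (map_poly (@ratr algC)).

Lemma conj_horner_rat (r : {poly rat}) (x : algC) : (toC r).[x]^* = (toC r).[x^*].
Proof.
rewrite -horner_map /= -map_poly_comp; congr (_.[_]).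
by apply: eq_map_poly => a /=; rewrite fmorph_rat.
Qed.

Lemma reduce_eq0_nonreal (c : rat) (D : {poly rat}) (s z : algC) :
  s^* = s -> z^* != z -> z ^+ 2 = s * z - ratr c -> root (toC D) z ->
  (toC (reduce_lin c D)).[s] = 0 /\ (toC (reduce_const c D)).[s] = 0.
Proof.
move=> s_real z_nonreal zE; rewrite /root (horner_reduce _ zE).
set a := _.[s]; set b := _.[s] => /eqP Dz.
have a_real : a^* = a by rewrite conj_horner_rat s_real.
have b_real : b^* = b by rewrite conj_horner_rat s_real.
suff a0 : a = 0 by split; last by rewrite -Dz a0 mul0r add0r.
apply: contraNeq z_nonreal => a_neq0; apply/eqP.
have azE : a * z = - b by apply/eqP; rewrite -addr_eq0 Dz.
have -> : z = - b / a by rewrite -azE [a * z]mulrC mulfK.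
by rewrite fmorph_div rmorphN /= a_real b_real.
Qed.

Lemma mul_quadratic_opp (R : comNzRingType) (x u s : R) : u ^+ 2 = s ^+ 2 *+ 4 ->
  (x ^+ 2 - u * x + s ^+ 2) * (x ^+ 2 + u * x + s ^+ 2) = (x - s) ^+ 2 * (x + s) ^+ 2.
Proof.
move=> uE; have -> : (x ^+ 2 - u * x + s ^+ 2) * (x ^+ 2 + u * x + s ^+ 2) =
  (x ^+ 2 + s ^+ 2) ^+ 2 - u ^+ 2 * x ^+ 2 by ring.
by rewrite uE; ring.
Qed.

Section WeilPolynomialPair.

Variables (g : nat) (c : rat) (w : 'I_g -> algC) (P f : {poly rat}).

Local Notation tr i := (w i + (w i)^*).

Hypothesis norm_w : forall i, w i * (w i)^* = ratr c.
Hypothesis P_roots :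
  toC P = \prod_(i < g) (('X - (w i)%:P) * ('X - ((w i)^*)%:P)).
Hypothesis f_roots : toC f = \prod_(i < g) ('X - (tr i)%:P).

Let wroots := [seq w i | i <- enum 'I_g] ++ [seq (w i)^* | i <- enum 'I_g].
Let trs := [seq tr i | i <- enum 'I_g].

Lemma w_quadratic i : w i ^+ 2 = tr i * w i - ratr c.
Proof. by rewrite mulrDl [(w i)^* * _]mulrC norm_w addrK expr2. Qed.

Lemma conj_w_quadratic i : (w i)^* ^+ 2 = tr i * (w i)^* - ratr c.
Proof. by rewrite mulrDl norm_w addrC addKr expr2. Qed.

Lemma P_roots_seq : toC P = \prod_(z <- wroots) ('X - z%:P).
Proof. by rewrite P_roots big_cat !big_map -enumT !big_enum big_split. Qed.

Lemma f_roots_seq : toC f = \prod_(z <- trs) ('X - z%:P).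
Proof. by rewrite f_roots big_map big_enum. Qed.

Lemma size_P : size P = g.*2.+1.
Proof.
rewrite -(size_map_poly (@ratr algC)) P_roots_seq size_prod_XsubC size_cat.
by rewrite !size_map -enumT size_enum_ord addnn.
Qed.

Lemma size_f : size f = g.+1.
Proof.
rewrite -(size_map_poly (@ratr algC)) f_roots_seq size_prod_XsubC.
by rewrite size_map size_enum_ord.
Qed.

Lemma root_P_w i : root (toC P) (w i).
Proof. by rewrite P_roots_seq root_prod_XsubC mem_cat map_f ?mem_enum. Qed.

Lemma root_f_tr i : root (toC f) (tr i).
Proof. by rewrite f_roots_seq root_prod_XsubC; apply/mapP; exists i; rewrite ?mem_enum. Qed.

Lemma root_P_cases z : root (toC P) z -> exists i, z = w i \/ z = (w i)^*.
Proof.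
rewrite P_roots_seq root_prod_XsubC mem_cat.
by case/orP => /mapP[i _ zE]; exists i; [left | right].
Qed.

Lemma root_f_cases z : root (toC f) z -> exists i, z = tr i.
Proof. by rewrite f_roots_seq root_prod_XsubC => /mapP[i _ ->]; exists i. Qed.

Lemma irreducible_f_of_P : c != 0 -> irreducible_poly P -> irreducible_poly f.
Proof.
move=> c_neq0 P_irr; have [] := P_irr; rewrite size_P ltnS double_gt0 => g_gt0 _.
split=> [|D size_D D_dvd_f]; first by rewrite size_f ltnS.
have D_neq0 : D != 0 by apply: contraTneq D_dvd_f => ->; rewrite dvd0p -size_poly_eq0 size_f.
rewrite -dvdp_size_eqp // eqn_leq dvdp_leq -?size_poly_eq0 ?size_f //=.
have [z Dz] : exists z, root (toC D) z by apply/closed_rootP; rewrite size_map_poly.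
have [k zE] : exists k, z = tr k.
  by apply: root_f_cases; apply: root_dvdp Dz; rewrite dvdp_map.
subst z.
have wkE : w k ^+ 2 + ratr c = w k * tr k by rewrite w_quadratic subrK mulrC.
have root_recip : root (toC (recip_comp c D)) (w k).
  by rewrite /root (horner_recip_comp _ wkE) (eqP Dz) mulr0.
have := irreducible_dvdp_common_root P_irr (root_P_w k) root_recip.
move=> /(dvdp_leq (recip_comp_neq0 c_neq0 D_neq0))/leq_trans/(_ (size_recip_comp c D)).
by rewrite size_P ltnS leq_double -ltnS prednK ?size_poly_gt0.
Qed.

Lemma injective_tr : irreducible_poly f -> injective (fun i => tr i).
Proof.
move=> f_irr; apply/injectiveP; rewrite /injectiveb /dinjectiveb.
have := pchar0_irreducible_separable (pchar_num _) f_irr.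
by rewrite -(separable_map (@ratr algC)) f_roots_seq separable_prod_XsubC.
Qed.

Lemma uniq_wroots : irreducible_poly f -> (forall i, (w i)^* != w i) -> uniq wroots.
Proof.
move=> f_irr nonreal; have tr_inj := injective_tr f_irr.
have w_inj : injective w by move=> i j wij; apply: tr_inj; rewrite /= wij.
have cw_inj : injective (fun i => (w i)^*).
  by move=> i j /= /(congr1 Num.conj); rewrite !conjCK => /w_inj.
rewrite cat_uniq !map_inj_uniq // -enumT enum_uniq andbT /=.
apply/hasPn => _ /mapP[i _ ->]; apply/mapP => -[j _ wij].
have ji : j = i by apply: tr_inj; rewrite /= -wij conjCK addrC.
by move: (nonreal i); rewrite wij ji eqxx.
Qed.

Lemma irreducible_P_of_f :
  (forall i, (w i)^* != w i) -> irreducible_poly f -> irreducible_poly P.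
Proof.
move=> nonreal f_irr; have [] := f_irr; rewrite size_f ltnS => g_gt0 _.
split=> [|D size_D D_dvd_P]; first by rewrite size_P ltnS double_gt0.
have D_neq0 : D != 0.
  by apply: contraTneq D_dvd_P => ->; rewrite dvd0p -size_poly_eq0 size_P.
have [z Dz] : exists z, root (toC D) z by apply/closed_rootP; rewrite size_map_poly.
have [j zE] : exists j, z = w j \/ z = (w j)^*.
  by apply: root_P_cases; apply: root_dvdp Dz; rewrite dvdp_map.
have [z_nonreal z_quad] : z^* != z /\ z ^+ 2 = tr j * z - ratr c.
  case: zE => ->; split; [exact: nonreal | exact: w_quadratic | | exact: conj_w_quadratic].
  by rewrite conjCK eq_sym.
have tr_real : (tr j)^* = tr j by rewrite rmorphD /= conjCK addrC.
have [lin0 const0] := reduce_eq0_nonreal tr_real z_nonreal z_quad Dz.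
have f_dvd_lin := irreducible_dvdp_common_root f_irr (root_f_tr j) (introT eqP lin0).
have f_dvd_const := irreducible_dvdp_common_root f_irr (root_f_tr j) (introT eqP const0).
have D_root k x : x ^+ 2 = tr k * x - ratr c -> root (toC D) x.
  move=> xE; rewrite /root (horner_reduce _ xE).
  have /eqP -> : root (toC (reduce_lin c D)) (tr k).
    by apply: root_dvdp (root_f_tr k); rewrite dvdp_map.
  have /eqP -> : root (toC (reduce_const c D)) (tr k).
    by apply: root_dvdp (root_f_tr k); rewrite dvdp_map.
  by rewrite mul0r addr0.
have D_wroots : all (root (toC D)) wroots.
  apply/allP => x; rewrite mem_cat => /orP[] /mapP[k _ ->]; apply: (D_root k).
  - exact: w_quadratic.
  - exact: conj_w_quadratic.
have P_dvd_D : P %| D.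
  rewrite -(dvdp_map (@ratr algC)) P_roots_seq uniq_roots_dvdp //.
  by rewrite uniq_rootsE uniq_wroots.
by rewrite /eqp D_dvd_P P_dvd_D.
Qed.

Lemma quadratic_factor i :
  ('X - (w i)%:P) * ('X - ((w i)^*)%:P) = 'X^2 - (tr i)%:P * 'X + (ratr c)%:P.
Proof. by rewrite -(norm_w i) polyCD polyCM; ring. Qed.

Lemma P_eq_of_real_w i (s : algC) : (2 <= g)%N -> irreducible_poly f -> (w i)^* = w i ->
  s ^+ 2 = ratr c -> toC P = ('X - s%:P) ^+ 2 * ('X + s%:P) ^+ 2.
Proof.
move=> le2g f_irr w_real sE.
pose R : {poly rat} := 'X^2 - (c *+ 4)%:P.
have root_R x : root (toC R) x = (x ^+ 2 == ratr c *+ 4).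
  by rewrite /root rmorphB /= map_polyXn map_polyC raddfMn /= !hornerE subr_eq0.
have f_dvd_R : f %| R.
  apply: irreducible_dvdp_common_root f_irr (root_f_tr i) _.
  by rewrite root_R w_real -mulr2n exprMn_n -(norm_w i) w_real.
have g_eq2 : g = 2%N.
  apply/eqP; rewrite eqn_leq le2g andbT -ltnS -size_f.
  have size_R : size R = 3 by rewrite size_XnsubC.
  by rewrite (leq_trans (dvdp_leq _ f_dvd_R)) ?size_R // -size_poly_eq0 size_R.
have tr_sqr j : tr j ^+ 2 = s ^+ 2 *+ 4.
  by apply/eqP; rewrite sE -root_R; apply: root_dvdp (root_f_tr j); rewrite dvdp_map.
have tr_inj := injective_tr f_irr.
have P_quad : toC P = \prod_(j < g) ('X^2 - (tr j)%:P * 'X + (ratr c)%:P).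
  by rewrite P_roots; apply: eq_bigr => j _; apply: quadratic_factor.
subst g; rewrite P_quad big_ord_recl big_ord1.
have tr_opp : tr (lift ord0 ord0) = - tr ord0.
  apply/eqP; rewrite -addr_eq0; move/eqP: (tr_sqr (lift ord0 ord0)).
  rewrite -(tr_sqr ord0) -subr_eq0 subr_sqr mulf_eq0 subr_eq0 orbC => /orP[] // /eqP.
  by move/tr_inj/eqP; rewrite eq_sym (negPf (neq_lift _ _)).
rewrite tr_opp polyCN mulNr opprK -sE polyC_exp mul_quadratic_opp //.
by rewrite -!polyC_exp tr_sqr polyCMn.
Qed.

End WeilPolynomialPair.

Lemma map_ratr_int_poly (p : {poly int}) :
  toC (map_poly intr p : {poly rat}) = polyC_of_int p.
Proof. by rewrite -map_poly_comp; apply: eq_map_poly => x /=; rewrite ratr_int. Qed.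

Theorem mainTheorem3 (p n g : nat) (P f : {poly int}) (w : 'I_g -> algC) :
  prime p -> (0 < n)%N -> (2 <= g)%N ->
  Weil_roots (p ^ n)%N g P w ->
  (* f(t) = prod_i (t + x_i) with x_i = -(w_i + conj w_i) *)
  polyC_of_int f = \prod_(i < g) ('X + (- (w i + Num.conj (w i)))%:P) ->
  polyC_of_int P != ('X - (sqrtC (p ^ n)%N%:R)%:P) ^+ 2 * ('X + (sqrtC (p ^ n)%N%:R)%:P) ^+ 2 ->
  (irreducible_over_Q P <-> irreducible_over_Q f).
Proof.
move=> p_prime _ le2g [_ [w_Weil P_roots]] f_roots P_neq.
set q := (p ^ n)%N in w_Weil P_neq.
have q_neq0 : (q%:R : rat) != 0 by rewrite pnatr_eq0 -lt0n expn_gt0 prime_gt0.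
have norm_w i : w i * (w i)^* = ratr (q%:R : rat).
  by rewrite rmorph_nat -normCK (proj2 (w_Weil i) idfun) sqrtCK.
rewrite -!map_ratr_int_poly in P_roots f_roots P_neq.
have {}f_roots : toC (map_poly intr f) = \prod_(i < g) ('X - (w i + (w i)^*)%:P).
  by rewrite f_roots; apply: eq_bigr => i _; rewrite polyCN.
split; first exact: (irreducible_f_of_P norm_w P_roots f_roots q_neq0).
move=> f_irr; apply: (irreducible_P_of_f norm_w P_roots f_roots _ f_irr) => i.
apply: contra_neq P_neq => w_real.
by apply: (P_eq_of_real_w norm_w P_roots f_roots le2g f_irr w_real); rewrite sqrtCK rmorph_nat.
Qed.
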